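(* In the polar Brauer category $\mathcal{AB}(\delta)$ (over a commutative ring $K$, $\delta\in K$), the identity $[\mathbb H_{01}+\mathbb H_{02},\mathbb H_{12}]=0$ holds in $\mathrm{End}_{\mathcal{AB}(\delta)}(2)$.
   Context: Let $K$ be a commutative ring and $\delta\in K$. The Brauer category $\mathcal B(\delta)$ has objects $\mathbb N$; $\mathrm{Hom}_{\mathcal B(\delta)}(r,s)$ is the free $K$-module on Brauer $(r,s)$-diagrams; composition $BA$ (first $A$, then $B$) is stacking with closed loops replaced by a factor $\delta$; $\otimes$ is juxtaposition. $I$ is the identity of $1$, $I_r=I^{\otimes r}$, $X$ the crossing, $\cap:2\to0$ the cap, $\cup:0\to2$ the cup, $H=X-\cup\circ\cap$. The polar Brauer category $\mathcal{AB}(\delta)$ is the $K$-linear category with objects $\mathbb N$ generated, under composition and the right action $\mathbb D\mapsto\mathbb D\otimes B$ of morphisms $B$ of $\mathcal B(\delta)$ (juxtaposing $B$ on the right; $\mathbb D:r\to s$, $B:k\to\ell$ give $\mathbb D\otimes B:r+k\to s+\ell$), by $\mathbb I_0$ (a vertical pole, identity of $0$) and $\mathbb H:1\to1$ (pole joined by a horizontal connector to one thin strand), subject to: (i) $(\mathbb I_0\otimes B)(\mathbb I_0\otimes A)=\mathbb I_0\otimes BA$, $(\mathbb H\otimes B)(\mathbb I_1\otimes A)=(\mathbb I_1\otimes B)(\mathbb H\otimes A)=\mathbb H\otimes BA$, with $\mathbb I_r=\mathbb I_0\otimes I_r$; (ii) $[\mathbb H_{01},\mathbb H_{02}+\mathbb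 H_{12}]=0$ with $[a,b]=ab-ba$, $\mathbb H_{01}=\mathbb H\otimes I$, $\mathbb X_0=\mathbb I_0\otimes X$, $\mathbb H_{02}=\mathbb X_0\mathbb H_{01}\mathbb X_0$, $\mathbb H_{12}=\mathbb I_0\otimes H$; (iii) $\mathbb H^T=-\mathbb H$ where $\mathbb D^T=(\mathbb I_0\otimes\cap\otimes I)(\mathbb D\otimes X)(\mathbb I_0\otimes\cup\otimes I)$ for $\mathbb D:1\to1$; relations are imposed in all composites and right tensor products. Products of morphisms denote composition. *)

From mathcomp Require Import all_boot all_order all_algebra.
Set Implicit Arguments.
Unset Strict Implicit.
Unset Printing Implicit Defensive.
Import GRing.Theory.

(* An (r,s)-Brauer diagram is a perfect matching of the r+s points           *)
(* 'I_(r+s): points 0..r-1 are the source (bottom) points, points            *)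
(* r..r+s-1 the target (top) points, both read from left to right.           *)

Definition is_diag n (f : {ffun 'I_n -> 'I_n}) : bool :=
  [forall x, (f x != x) && (f (f x) == x)].

Definition diagram (r s : nat) := {f : {ffun 'I_(r + s) -> 'I_(r + s)} | is_diag f}.

(* the ordinal of 'I_n with value m, if m < n (a computable insub) *)
Definition ord_opt n (m : nat) : option 'I_n :=
  (if (m < n)%N as b return (m < n)%N = b -> option 'I_n
   then fun H => Some (Ordinal H) else fun _ => None) erefl.

(* reading a function on 'I_n as a function on nat (identity outside)   *)
Definition fnat n (f : {ffun 'I_n -> 'I_n}) (m : nat) : nat :=
  if ord_opt n m is Some i then val (f i) else m.

(* building a function on 'I_n from a function on nat (values out of    *)
(* range are replaced by the argument; never happens below)              *)
Definition mkf n (g : nat -> nat) : {ffun 'I_n -> 'I_n} :=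
  [ffun p : 'I_n => odflt p (ord_opt n (g p))].

(* Juxtaposition of an (r,s)-diagram fA (left) and a (k,l)-diagram fB       *)
(* (right), giving an (r+k, s+l)-diagram.                                   *)
Definition tens_fun r s k l (fA : {ffun 'I_(r + s) -> 'I_(r + s)})
    (fB : {ffun 'I_(k + l) -> 'I_(k + l)}) :
    {ffun 'I_(r + k + (s + l)) -> 'I_(r + k + (s + l))} :=
  let posA x := if (x < r)%N then x else (x + k)%N in
  let posB y := if (y < k)%N then (r + y)%N else (y + r + s)%N in
  mkf _ (fun p =>
    if p < r then posA (fnat fA p)
    else if p < r + k then posB (fnat fB (p - r))
    else if p < r + k + s then posA (fnat fA (p - k))
    else posB (fnat fB (p - r - s)))%N.

(* Stacking: fA an (r,s)-diagram, fB an (s,t)-diagram (fB on top of fA).    *)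
(* The stacked picture has vertices 'I_(r+s+t): vertex u < r+s is point u   *)
(* of fA, vertex u >= r is point u-r of fB (middle vertices are shared).    *)
Section Stacking.
Variables (r s t : nat) (fA : {ffun 'I_(r + s) -> 'I_(r + s)})
          (fB : {ffun 'I_(s + t) -> 'I_(s + t)}).

Definition cedge : rel 'I_(r + s + t) := fun u v =>
  ((u < r + s) && (fnat fA u == v)) || ((r <= u) && (fnat fB (u - r) + r == v))%N.

Definition cconn (m m' : nat) : bool :=
  [exists u : 'I_(r + s + t), [exists v : 'I_(r + s + t),
     [&& val u == m, val v == m' & connect cedge u v]]].

(* position of a point of the composite diagram among the vertices *)
Definition cvtx (p : nat) : nat := if (p < r)%N then p else (p + s)%N.

Definition comp_fun : {ffun 'I_(r + t) -> 'I_(r + t)} :=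
  [ffun p : 'I_(r + t) =>
     odflt p [pick q : 'I_(r + t) | (q != p) && cconn (cvtx p) (cvtx q)]].

(* number of closed loops: connected components consisting only of middle  *)
(* vertices (each counted once, via its least vertex)                      *)
Definition loops : nat :=
  #|[set u : 'I_(r + s + t) | ((r <= u < r + s)%N) &&
      [forall v, connect cedge u v ==> ((r <= v < r + s)%N && (u <= v)%N)]]|.

End Stacking.

(* The Brauer category B(delta): Hom(r,s) = free K-module on Brauer         *)
(* (r,s)-diagrams, realised as coefficient functions.                        *)
Section Brauer.
Variables (K : comPzRingType) (delta : K).

Definition Bhom (r s : nat) := {ffun diagram r s -> K}.

Definition badd r s (a b : Bhom r s) : Bhom r s := [ffun d => (a d + b d)%R].
Definition bscale r s (c : K) (a : Bhom r s) : Bhom r s := [ffun d => (c * a d)%R].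

(* composition b a : first a, then b; closed loops give a factor delta *)
Definition bcomp r s t (b : Bhom s t) (a : Bhom r s) : Bhom r t :=
  [ffun e : diagram r t =>
     (\sum_(d1 : diagram r s) \sum_(d2 : diagram s t)
       if comp_fun (val d1) (val d2) == val e
       then b d2 * a d1 * delta ^+ loops (val d1) (val d2) else 0)%R].

Definition btens r s k l (a : Bhom r s) (b : Bhom k l) : Bhom (r + k) (s + l) :=
  [ffun e : diagram (r + k) (s + l) =>
     (\sum_(d1 : diagram r s) \sum_(d2 : diagram k l)
       if tens_fun (val d1) (val d2) == val e then a d1 * b d2 else 0)%R].

Definition bof r s (g : nat -> nat) : Bhom r s :=
  [ffun d : diagram r s => ((val d == mkf (r + s) g) : nat)%:R%R].

Definition bId r : Bhom r r :=
  bof r r (fun p => if (p < r)%N then (p + r)%N else (p - r)%N).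
Definition bI : Bhom 1 1 := bId 1.
(* X : crossing, source 0 -- target 1, source 1 -- target 0 *)
Definition bX : Bhom 2 2 := bof 2 2 (fun p => (3 - p)%N).
Definition bcap : Bhom 2 0 := bof 2 0 (fun p => (1 - p)%N).
Definition bcup : Bhom 0 2 := bof 0 2 (fun p => (1 - p)%N).
Definition bH : Bhom 2 2 := badd bX (bscale (-1)%R (bcomp bcup bcap)).

End Brauer.

(* The polar Brauer category AB(delta), by generators and relations.         *)
(* Morphisms r -> s are formal expressions (abterm r s) modulo the least     *)
(* congruence (abeq) containing the axioms of a K-linear category, of a      *)
(* (K-bilinear, associative, unital, functorial) right action of B(delta),   *)
(* and the relations (i), (ii), (iii).                                       *)

Inductive abterm (K : comPzRingType) : nat -> nat -> Type :=
| AI0 : abterm K 0 0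
| AH : abterm K 1 1
| Acomp r s t : abterm K s t -> abterm K r s -> abterm K r t (* BA: first A *)
| Atens r s k l : abterm K r s -> Bhom K k l -> abterm K (r + k) (s + l)
| Azero r s : abterm K r s
| Aadd r s : abterm K r s -> abterm K r s -> abterm K r s
| Ascale r s : K -> abterm K r s -> abterm K r s.

Arguments AI0 {K}.
Arguments AH {K}.
Arguments Azero {K r s}.

Definition tcast (K : comPzRingType) r s r' s' (er : r = r') (es : s = s')
  (a : abterm K r s) : abterm K r' s' :=
  match er in _ = r0, es in _ = s0 return abterm K r0 s0 with
  | erefl, erefl => a end.

Section ABdefs.
Variables (K : comPzRingType) (delta : K).

Definition AId r : abterm K r r := Atens AI0 (bId K r).
Definition Acomm r (a b : abterm K r r) : abterm K r r :=
  Aadd (Acomp a b) (Ascale (-1)%R (Acomp b a)).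

Definition AH01 : abterm K 2 2 := Atens AH (bI K).
Definition AX0 : abterm K 2 2 := Atens AI0 (bX K).
Definition AH02 : abterm K 2 2 := Acomp AX0 (Acomp AH01 AX0).
Definition AH12 : abterm K 2 2 := Atens AI0 (bH delta).

Definition Atransp (D : abterm K 1 1) : abterm K 1 1 :=
  @Acomp K 1 3 1 (Atens AI0 (btens (bcap K) (bI K)))
    (@Acomp K 1 3 3 (Atens D (bX K)) (Atens AI0 (btens (bcup K) (bI K)))).

End ABdefs.

Inductive abeq (K : comPzRingType) (delta : K) :
    forall r s, abterm K r s -> abterm K r s -> Prop :=
| abeq_refl r s (a : abterm K r s) : abeq delta a a
| abeq_sym r s (a b : abterm K r s) : abeq delta a b -> abeq delta b a
| abeq_trans r s (a b c : abterm K r s) :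
    abeq delta a b -> abeq delta b c -> abeq delta a c
| abeq_comp r s t (a a' : abterm K s t) (b b' : abterm K r s) :
    abeq delta a a' -> abeq delta b b' -> abeq delta (Acomp a b) (Acomp a' b')
| abeq_tens r s k l (a a' : abterm K r s) (B : Bhom K k l) :
    abeq delta a a' -> abeq delta (Atens a B) (Atens a' B)
| abeq_add r s (a a' b b' : abterm K r s) :
    abeq delta a a' -> abeq delta b b' -> abeq delta (Aadd a b) (Aadd a' b')
| abeq_scale r s (c : K) (a a' : abterm K r s) :
    abeq delta a a' -> abeq delta (Ascale c a) (Ascale c a')
| abeq_addA r s (a b c : abterm K r s) :
    abeq delta (Aadd a (Aadd b c)) (Aadd (Aadd a b) c)
| abeq_addC r s (a b : abterm K r s) : abeq delta (Aadd a b) (Aadd b a)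
| abeq_add0 r s (a : abterm K r s) : abeq delta (Aadd a Azero) a
| abeq_addN r s (a : abterm K r s) :
    abeq delta (Aadd a (Ascale (-1)%R a)) Azero
| abeq_scaleA r s (c d : K) (a : abterm K r s) :
    abeq delta (Ascale (c * d)%R a) (Ascale c (Ascale d a))
| abeq_scale1 r s (a : abterm K r s) : abeq delta (Ascale 1%R a) a
| abeq_scaleDr r s (c : K) (a b : abterm K r s) :
    abeq delta (Ascale c (Aadd a b)) (Aadd (Ascale c a) (Ascale c b))
| abeq_scaleDl r s (c d : K) (a : abterm K r s) :
    abeq delta (Ascale (c + d)%R a) (Aadd (Ascale c a) (Ascale d a))
| abeq_compA r s t u (a : abterm K t u) (b : abterm K s t) (c : abterm K r s) :
    abeq delta (Acomp a (Acomp b c)) (Acomp (Acomp a b) c)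
| abeq_idl r s (a : abterm K r s) : abeq delta (Acomp (AId K s) a) a
| abeq_idr r s (a : abterm K r s) : abeq delta (Acomp a (AId K r)) a
| abeq_compDl r s t (a b : abterm K s t) (c : abterm K r s) :
    abeq delta (Acomp (Aadd a b) c) (Aadd (Acomp a c) (Acomp b c))
| abeq_compDr r s t (a : abterm K s t) (b c : abterm K r s) :
    abeq delta (Acomp a (Aadd b c)) (Aadd (Acomp a b) (Acomp a c))
| abeq_compZl r s t (k : K) (a : abterm K s t) (b : abterm K r s) :
    abeq delta (Acomp (Ascale k a) b) (Ascale k (Acomp a b))
| abeq_compZr r s t (k : K) (a : abterm K s t) (b : abterm K r s) :
    abeq delta (Acomp a (Ascale k b)) (Ascale k (Acomp a b))
| abeq_tensDl r s k l (a b : abterm K r s) (B : Bhom K k l) :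
    abeq delta (Atens (Aadd a b) B) (Aadd (Atens a B) (Atens b B))
| abeq_tensZl r s k l (c : K) (a : abterm K r s) (B : Bhom K k l) :
    abeq delta (Atens (Ascale c a) B) (Ascale c (Atens a B))
| abeq_tensDr r s k l (a : abterm K r s) (B B' : Bhom K k l) :
    abeq delta (Atens a (badd B B')) (Aadd (Atens a B) (Atens a B'))
| abeq_tensZr r s k l (c : K) (a : abterm K r s) (B : Bhom K k l) :
    abeq delta (Atens a (bscale c B)) (Ascale c (Atens a B))
| abeq_tensA r s k l k' l' (a : abterm K r s) (B : Bhom K k l) (B' : Bhom K k' l') :
    abeq delta (tcast (esym (addnA r k k')) (esym (addnA s l l')) (Atens (Atens a B) B'))
               (Atens a (btens B B'))
| abeq_tens1 r s (a : abterm K r s) :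
    abeq delta (tcast (addn0 r) (addn0 s) (Atens a (bId K 0))) a
| abeq_interchange r s t j k l (a : abterm K s t) (b : abterm K r s)
    (B : Bhom K k l) (A : Bhom K j k) :
    abeq delta (Acomp (Atens a B) (Atens b A)) (Atens (Acomp a b) (bcomp delta B A))
| abeq_i0 j k l (B : Bhom K k l) (A : Bhom K j k) :
    abeq delta (Acomp (Atens AI0 B) (Atens AI0 A)) (Atens AI0 (bcomp delta B A))
| abeq_i1 j k l (B : Bhom K k l) (A : Bhom K j k) :
    abeq delta (Acomp (Atens AH B) (Atens (AId K 1) A)) (Atens AH (bcomp delta B A))
| abeq_i2 j k l (B : Bhom K k l) (A : Bhom K j k) :
    abeq delta (Acomp (Atens (AId K 1) B) (Atens AH A)) (Atens AH (bcomp delta B A))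
| abeq_ii : abeq delta (Acomm (AH01 K) (Aadd (AH02 K) (AH12 delta))) Azero
| abeq_iii : abeq delta (Atransp AH) (Ascale (-1)%R AH).

From mathcomp Require Import all_boot all_order all_algebra.
From mathcomp Require Import zify.
From Stdlib Require Import Setoid Morphisms.
Set Implicit Arguments. Unset Strict Implicit. Unset Printing Implicit Defensive.
Import GRing.Theory.

(* Conjugation by the crossing X0 = I0 (x) X is an involutive automorphism of
   End(2) that swaps H01 and H02 and fixes H12, because X o X = I2,
   X o cup = cup and cap o X = cap in the Brauer category.  Conjugating
   relation (ii) therefore gives [H02, H01 + H12] = 0, and adding this to (ii)
   yields the claim, since [a, b + c] + [b, a + c] = [a + b, c] in any
   K-linear category. *)

Lemma ord_optE n m (lt_mn : m < n) : ord_opt n m = Some (Ordinal lt_mn).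
Proof.
rewrite /ord_opt; move: (erefl (m < n)); rewrite {2 3}lt_mn => mn_true.
by congr Some; apply: val_inj.
Qed.

Lemma mkfE n (g : nat -> nat) (i : 'I_n) : g i < n -> val (mkf n g i) = g i.
Proof. by move=> lt_gn; rewrite /mkf ffunE (ord_optE lt_gn). Qed.

Lemma fnat_mkf n (g : nat -> nat) m : m < n -> g m < n -> fnat (mkf n g) m = g m.
Proof. by move=> lt_mn lt_gn; rewrite /fnat (ord_optE lt_mn) mkfE. Qed.

Definition all_lt N (P : pred nat) := all P (iota 0 N).

Lemma all_ltP N (P : pred nat) : reflect (forall m, m < N -> P m) (all_lt N P).
Proof.
by apply: (iffP allP) => H m lt_mN; apply: H; rewrite ?mem_iota in lt_mN *.
Qed.

Lemma all_lt2P N (P : nat -> nat -> bool) :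
  reflect (forall a b, a < N -> b < N -> P a b)
          (all_lt N (fun a => all_lt N (P a))).
Proof.
apply: (iffP (all_ltP _ _)) => H a.
  by move=> b /H /all_ltP; apply.
by move=> lt_aN; apply/all_ltP => b; apply: H.
Qed.

Definition matching n (g : nat -> nat) :=
  all_lt n (fun x => [&& g x < n, g x != x & g (g x) == x]).

Lemma is_diag_mkf n (g : nat -> nat) : matching n g -> is_diag (mkf n g).
Proof.
move=> /all_ltP g_match; apply/forallP => x.
have /and3P[lt_gx neq_gx gK] := g_match x (ltn_ord x).
by rewrite -!val_eqE !mkfE ?(eqP gK) ?neq_gx ?eqxx.
Qed.

Lemma matching_lt n (g : nat -> nat) m : matching n g -> m < n -> g m < n.
Proof. by move=> /all_ltP g_match /g_match /and3P[]. Qed.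

Definition stack_edge r s (gA gB : nat -> nat) (a b : nat) : bool :=
  ((a < r + s) && (gA a == b)) || ((r <= a) && (gB (a - r) + r == b)).

Definition stack_root N (nxt : nat -> nat) (a : nat) : nat := iter N nxt a.

Lemma cvtx_lt r s t p : p < r + t -> cvtx r s p < r + s + t.
Proof. by rewrite /cvtx; case: ifP => [lt_pr _|_]; lia. Qed.

Lemma bcomp_bof (K : comPzRingType) (delta : K) r s t (gA gB : nat -> nat) :
  matching (r + s) gA -> matching (s + t) gB ->
  let fA := mkf (r + s) gA in let fB := mkf (s + t) gB in
  bcomp delta (bof K s t gB) (bof K r s gA) =
  [ffun e : diagram r t =>
     (((val e == comp_fun fA fB) : nat)%:R * delta ^+ loops fA fB)%R].
Proof.
move=> /is_diag_mkf diagA /is_diag_mkf diagB fA fB; apply/ffunP => e; rewrite !ffunE.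
pose dA : diagram r s := exist _ fA diagA; pose dB : diagram s t := exist _ fB diagB.
have bofE m n g (d : diagram m n) (D : is_diag (mkf (m + n) g)) :
    bof K m n g d = ((d == exist _ (mkf (m + n) g) D :> diagram m n) : nat)%:R%R.
  by rewrite ffunE -val_eqE.
rewrite (bigD1 dA) //= [X in (_ + X)%R]big1 ?addr0 => [|d dA'].
  rewrite (bigD1 dB) //= [X in (_ + X)%R]big1 ?addr0 => [|d dB'].
    rewrite (bofE _ _ _ _ diagA) (bofE _ _ _ _ diagB) !eqxx !mul1r eq_sym.
    by case: ifP; rewrite ?mul1r ?mul0r.
  by rewrite (bofE _ _ _ _ diagB) (negbTE dB') !mul0r; case: ifP.
apply: big1 => d' _.
by rewrite (bofE _ _ _ _ diagA) (negbTE dA') mulr0 mul0r; case: ifP.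
Qed.

(* Finite functions and ordinals do not reduce, so the stacked graph is handled
   on nat; its connected components are certified by a step function [nxt]
   whose [N]-fold iterate sends each vertex to a representative of its
   component, which makes every hypothesis below decidable by [vm_compute]. *)
Section StackingCertificate.
Variables (r s t : nat) (gA gB nxt : nat -> nat).
Local Notation N := (r + s + t).
Local Notation e := (stack_edge r s gA gB).
Local Notation root := (stack_root N nxt).
Local Notation fA := (mkf (r + s) gA).
Local Notation fB := (mkf (s + t) gB).

Hypothesis gA_match : matching (r + s) gA.
Hypothesis gB_match : matching (s + t) gB.
Hypothesis e_sym : all_lt N (fun a => all_lt N (fun b => e a b ==> e b a)).
Hypothesis nxt_step : all_lt N (fun a => (nxt a < N) && ((nxt a == a) || e a (nxt a))).
Hypothesis root_e : all_lt N (fun a => all_lt N (fun b => e a b ==> (root a == root b))).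

Lemma cedge_mkf (u v : 'I_N) : cedge fA fB u v = e u v.
Proof.
have eA : u < r + s -> fnat fA u = gA u.
  by move=> lt_urs; rewrite fnat_mkf // (matching_lt gA_match).
have eB : r <= u -> fnat fB (u - r) = gB (u - r).
  move=> le_ru; have lt_uN := ltn_ord u.
  by rewrite fnat_mkf ?(matching_lt gB_match) //; lia.
by rewrite /cedge /stack_edge; case: ltnP => [/eA->|_] /=; case: leqP => [/eB->|].
Qed.

Lemma connect_mkf (u v : 'I_N) : connect (cedge fA fB) u v = (root u == root v).
Proof.
have eE : cedge fA fB =2 (fun a b : 'I_N => e a b) by move=> a b; rewrite cedge_mkf.
rewrite (eq_connect eE); set e' := fun a b : 'I_N => e a b.
have e'_sym : ssrbool.symmetric e'.
  by move=> a b; apply/idP/idP; apply/implyP/(all_lt2P _ _ e_sym).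
apply/idP/eqP.
  case/connectP => p + ->; elim: p u => [|w p IHp] u //= /andP[euw pw].
  rewrite -(IHp _ pw); apply/eqP; move: euw.
  by apply/implyP/(all_lt2P _ _ root_e).
have to_root k (a : 'I_N) : exists2 b : 'I_N, val b = iter k nxt a & connect e' a b.
  elim: k => [|k [b vb cab]]; first by exists a.
  have /andP[lt_nb step] := all_ltP _ _ nxt_step b (ltn_ord b).
  exists (Ordinal lt_nb); first by rewrite iterS -vb.
  apply: connect_trans cab _; case/orP: step => [/eqP nbE|eb].
    by apply: eq_connect0; apply: val_inj; rewrite /= nbE.
  exact: connect1.
move=> ruv; have [bu buE cu] := to_root N u; have [bv bvE cv] := to_root N v.
have buv : bu = bv by apply: val_inj; rewrite buE bvE.
by apply: connect_trans cu _; rewrite buv (sym_connect_sym e'_sym).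
Qed.

Lemma cconn_mkf m m' : cconn fA fB m m' = [&& m < N, m' < N & root m == root m'].
Proof.
rewrite /cconn; apply/idP/and3P => [|[lt_m lt_m' rmm']].
  case/existsP=> u /existsP[v /and3P[/eqP <- /eqP <-]].
  by rewrite connect_mkf => ruv; split; rewrite ?ltn_ord.
apply/existsP; exists (Ordinal lt_m); apply/existsP; exists (Ordinal lt_m').
by rewrite !eqxx connect_mkf.
Qed.

Variable h : nat -> nat.
Hypothesis h_match : matching (r + t) h.
Hypothesis h_spec : all_lt (r + t) (fun p => all_lt (r + t) (fun q =>
  ((q != p) && (root (cvtx r s p) == root (cvtx r s q))) == (q == h p))).

Lemma comp_fun_mkf : comp_fun fA fB = mkf (r + t) h.
Proof.
apply/ffunP => p; have lt_hp := matching_lt h_match (ltn_ord p).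
rewrite /comp_fun /mkf !ffunE (ord_optE lt_hp) /=.
have spec (q : 'I_(r + t)) :
    (q != p) && cconn fA fB (cvtx r s p) (cvtx r s q) = (val q == h p).
  rewrite cconn_mkf !cvtx_lt //=.
  exact: (eqP (all_lt2P _ _ h_spec p q (ltn_ord p) (ltn_ord q))).
case: pickP => [q | none]; first by rewrite spec => /eqP qE; apply: val_inj.
by have := none (Ordinal lt_hp); rewrite spec eqxx.
Qed.

Hypothesis no_loop : all_lt N (fun u => (r <= u < r + s) ==>
  has (fun v => ~~ (r <= v < r + s) && (root u == root v)) (iota 0 N)).

Lemma loops_mkf : loops fA fB = 0.
Proof.
apply/eqP; rewrite cards_eq0; apply/eqP/setP => u; rewrite !inE.
apply/negbTE/andP => -[mid_u /forallP closed_u].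
have /hasP[v] := implyP (all_ltP _ _ no_loop u (ltn_ord u)) mid_u.
rewrite mem_iota => /andP[_ lt_v] /andP[/negP bnd_v ruv].
by have := closed_u (Ordinal lt_v); rewrite connect_mkf ruv => /andP[].
Qed.

Variables (K : comPzRingType) (delta : K).

Lemma bcomp_bof_stack : bcomp delta (bof K s t gB) (bof K r s gA) = bof K r t h.
Proof.
rewrite bcomp_bof // comp_fun_mkf loops_mkf; apply/ffunP => e.
by rewrite !ffunE expr0 mulr1.
Qed.

End StackingCertificate.

Section BrauerRelations.
Variables (K : comPzRingType) (delta : K).

Lemma bcomp_XX : bcomp delta (bX K) (bX K) = bId K 2.
Proof.
apply: (bcomp_bof_stack
  (nxt := fun a => match a with 2 => 1 | 3 => 0 | 4 => 3 | 5 => 2 | _ => a end));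
  by vm_compute.
Qed.

Lemma bcomp_X_cup : bcomp delta (bX K) (bcup K) = bcup K.
Proof.
apply: (bcomp_bof_stack
  (nxt := fun a => match a with 1 => 0 | 2 => 1 | 3 => 0 | _ => a end));
  by vm_compute.
Qed.

Lemma bcomp_cap_X : bcomp delta (bcap K) (bX K) = bcap K.
Proof.
apply: (bcomp_bof_stack
  (nxt := fun a => match a with 1 => 2 | 2 => 3 | 3 => 0 | _ => a end));
  by vm_compute.
Qed.

End BrauerRelations.

#[local] Hint Resolve abeq_refl : core.

#[local] Instance abeq_Equivalence (K : comPzRingType) (delta : K) r s :
  Equivalence (@abeq K delta r s).
Proof. by split; [exact: abeq_refl | exact: abeq_sym | exact: abeq_trans]. Qed.

#[local] Instance Aadd_Proper (K : comPzRingType) (delta : K) r s :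
  Proper (@abeq K delta r s ==> @abeq K delta r s ==> @abeq K delta r s)
         (@Aadd K r s).
Proof. by move=> a a' eq_a b b' eq_b; apply: abeq_add. Qed.

#[local] Instance Ascale_Proper (K : comPzRingType) (delta : K) r s c :
  Proper (@abeq K delta r s ==> @abeq K delta r s) (@Ascale K r s c).
Proof. by move=> a a' eq_a; apply: abeq_scale. Qed.

#[local] Instance Acomp_Proper (K : comPzRingType) (delta : K) r s t :
  Proper (@abeq K delta s t ==> @abeq K delta r s ==> @abeq K delta r t)
         (@Acomp K r s t).
Proof. by move=> a a' eq_a b b' eq_b; apply: abeq_comp. Qed.

#[local] Instance Acomm_Proper (K : comPzRingType) (delta : K) r :
  Proper (@abeq K delta r r ==> @abeq K delta r r ==> @abeq K delta r r)
         (@Acomm K r).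
Proof. by move=> a a' eq_a b b' eq_b; rewrite /Acomm eq_a eq_b. Qed.

Section PolarBrauerCategory.
Variables (K : comPzRingType) (delta : K).
Local Notation "a ≈ b" := (abeq delta a b) (at level 70).
Local Notation Aopp a := (Ascale (-1)%R a).

Lemma Aadd0l r s (a : abterm K r s) : Aadd Azero a ≈ a.
Proof. by rewrite abeq_addC abeq_add0. Qed.

Lemma AaddACA r s (a b c d : abterm K r s) :
  Aadd (Aadd a b) (Aadd c d) ≈ Aadd (Aadd a c) (Aadd b d).
Proof.
rewrite -(abeq_addA delta a b) (abeq_addA delta b c) (abeq_addC delta b c).
by rewrite -(abeq_addA delta c b) (abeq_addA delta a c).
Qed.

Lemma Ascale0 r s (a : abterm K r s) : Ascale 0 a ≈ Azero.
Proof. by rewrite -(subrr (1 : K)%R) abeq_scaleDl abeq_scale1 abeq_addN. Qed.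

Lemma Acomp0l r s t (a : abterm K r s) : Acomp (@Azero K s t) a ≈ Azero.
Proof. by rewrite -(Ascale0 Azero) abeq_compZl Ascale0. Qed.

Lemma Acomp0r r s t (a : abterm K s t) : Acomp a (@Azero K r s) ≈ Azero.
Proof. by rewrite -(Ascale0 Azero) abeq_compZr Ascale0. Qed.

Lemma Acomm_addl r (a b c : abterm K r r) :
  Acomm (Aadd a b) c ≈ Aadd (Acomm a (Aadd b c)) (Acomm b (Aadd a c)).
Proof.
rewrite /Acomm !abeq_compDr !abeq_compDl !abeq_scaleDr.
set ab := Acomp a b; set ba := Acomp b a.
rewrite (AaddACA (Aadd ab _)) (AaddACA ab) (AaddACA (Aopp ba)).
rewrite (abeq_addC delta (Aopp ba) (Aopp ab)) (AaddACA (Aadd ab ba)) (AaddACA ab).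
by rewrite !abeq_addN Aadd0l Aadd0l.
Qed.

Section Conjugation.
Variables (r : nat) (x : abterm K r r).
Hypothesis xx : Acomp x x ≈ AId K r.

Definition Aconj (a : abterm K r r) : abterm K r r := Acomp x (Acomp a x).

Lemma Aconj_comp a b : Aconj (Acomp a b) ≈ Acomp (Aconj a) (Aconj b).
Proof. by rewrite /Aconj -!abeq_compA (abeq_compA delta x x) xx abeq_idl. Qed.

Lemma Aconj_add a b : Aconj (Aadd a b) ≈ Aadd (Aconj a) (Aconj b).
Proof. by rewrite /Aconj abeq_compDl abeq_compDr. Qed.

Lemma Aconj_scale c a : Aconj (Ascale c a) ≈ Ascale c (Aconj a).
Proof. by rewrite /Aconj abeq_compZl abeq_compZr. Qed.

Lemma Aconj0 : Aconj Azero ≈ Azero.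
Proof. by rewrite /Aconj Acomp0l Acomp0r. Qed.

Lemma AconjK a : Aconj (Aconj a) ≈ a.
Proof.
by rewrite /Aconj -!abeq_compA (abeq_compA delta x x) xx abeq_idl abeq_idr.
Qed.

Lemma Aconj_self : Aconj x ≈ x.
Proof. by rewrite /Aconj xx abeq_idr. Qed.

Lemma Aconj_comm a b : Aconj (Acomm a b) ≈ Acomm (Aconj a) (Aconj b).
Proof. by rewrite /Acomm Aconj_add Aconj_scale !Aconj_comp. Qed.

End Conjugation.

#[local] Instance Aconj_Proper r (x : abterm K r r) :
  Proper (@abeq K delta r r ==> @abeq K delta r r) (Aconj x).
Proof. by move=> a a' eq_a; rewrite /Aconj eq_a. Qed.

Lemma AX0_involutive : Acomp (AX0 K) (AX0 K) ≈ AId K 2.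
Proof. by rewrite /AX0 abeq_i0 bcomp_XX. Qed.

Lemma Aconj_X0_H12 : Aconj (AX0 K) (AH12 delta) ≈ AH12 delta.
Proof.
have H12E : AH12 delta ≈
    Aadd (AX0 K) (Aopp (Acomp (Atens AI0 (bcup K)) (Atens AI0 (bcap K)))).
  by rewrite /AH12 /bH abeq_tensDr abeq_tensZr abeq_i0.
rewrite H12E Aconj_add Aconj_scale (Aconj_self AX0_involutive).
rewrite /Aconj -!abeq_compA (abeq_compA delta (AX0 K)).
by rewrite /AX0 !abeq_i0 bcomp_X_cup bcomp_cap_X.
Qed.

Lemma abeq_ii_swap : Acomm (AH02 K) (Aadd (AH01 K) (AH12 delta)) ≈ Azero.
Proof.
rewrite -(Aconj0 (AX0 K)) -(abeq_ii delta).
rewrite (Aconj_comm AX0_involutive) Aconj_add (AconjK AX0_involutive).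
by rewrite Aconj_X0_H12.
Qed.

End PolarBrauerCategory.

Local Open Scope ring_scope.

Theorem lemma2p10 (K : comPzRingType) (delta : K) :
  abeq delta (Acomm (Aadd (AH01 K) (AH02 K)) (AH12 delta)) (@Azero K 2 2).
Proof. by rewrite Acomm_addl abeq_ii abeq_ii_swap abeq_add0. Qed.
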